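(* Let $f:\mathcal X^n\to\mathcal T$ with $\mathcal T$ finite, let $\varepsilon>0$, and let $M$ be an $\varepsilon$-differentially private mechanism with values in $\mathcal T$. Then $$\inf_{x\in\mathcal X^n}\mathbb P(M(x)=f(x))\le \inf_{x\in\mathcal X^n}\frac{1}{\sum_{t\in\mathcal T}e^{-\mathrm{len}_f(x;t)\varepsilon}}.$$ If in addition $M$ is $L_{0,1}$-unbiased, where $L_{0,1}(s,t)=\mathbf 1\{s\neq t\}$, then for every $x\in\mathcal X^n$, $$\mathbb P(M(x)=f(x))\le \frac{1}{\sum_{t\in\mathcal T}e^{-2\,\mathrm{len}_f(x;t)\varepsilon}}.$$
   Context: For $x=(x_1,\dots,x_n),x'\in\mathcal X^n$, $d_H(x,x')=|\{i:x_i\neq x_i'\}|$ is the Hamming distance; $x,x'$ are neighboring if $d_H(x,x')\le 1$. A mechanism is a randomized map $M$ from $\mathcal X^n$ to a measurable space; $M$ is $(\varepsilon,\delta)$-differentially private if for all neighboring $x,x'$ and all measurable $S$, $\mathbb P(M(x)\in S)\le e^{\varepsilon}\mathbb P(M(x')\in S)+\delta$, and $\varepsilon$-differentially private if this holds with $\delta=0$. The inverse sensitivity is $\mathrm{len}_f(x;t)=\inf\{d_H(x,x'):x'\in\mathcal X^n,\ f(x')=t\}$, with $\inf\emptyset=+\infty$ and $e^{-\infty}=0$. For a loss $L:\mathcal T\times\mathcal T\to\mathbb R_+$, a mechanism $M$ is $L$-unbiased if $\mathbb E[L(M(x),f(x))]\le \mathbb E[L(M(x),t)]$ for all $x\in\mathcal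 X^n$ and $t\in\mathcal T$; for $L_{0,1}$ this means $\mathbb P(M(x)=f(x))\ge \mathbb P(M(x)=t)$ for all $t$. *)

From HB Require Import structures.
From mathcomp Require Import all_boot all_order all_algebra.
From mathcomp Require Import all_classical all_reals all_analysis.
Set Implicit Arguments. Unset Strict Implicit. Unset Printing Implicit Defensive.
Import Order.TTheory GRing.Theory Num.Theory.
Local Open Scope ring_scope.
Local Open Scope classical_set_scope.

Definition hamming (X : Type) (n : nat) (x x' : 'I_n -> X) : nat :=
  #|[set i : 'I_n | ~~ `[< x i = x' i >]]|.

(* A (randomized) mechanism with values in a finite type T is given by the
   probability mass function M x t = P(M(x) = t). *)
Definition is_mechanism (R : realType) (X : Type) (n : nat) (T : finType)
  (M : ('I_n -> X) -> T -> R) : Prop :=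
  forall x, (forall t, 0 <= M x t) /\ \sum_(t : T) M x t = 1.

(* eps-differential privacy (delta = 0); on a finite T every subset is measurable. *)
Definition is_dp (R : realType) (X : Type) (n : nat) (T : finType)
  (eps : R) (M : ('I_n -> X) -> T -> R) : Prop :=
  forall x x', (hamming x x' <= 1)%N ->
    forall S : {set T}, \sum_(t in S) M x t <= expR eps * \sum_(t in S) M x' t.

(* inverse sensitivity len_f(x;t) as an extended real (+oo if t not in range) *)
Definition len_f (R : realType) (X : Type) (n : nat) (T : Type)
  (f : ('I_n -> X) -> T) (x : 'I_n -> X) (t : T) : \bar R :=
  ereal_inf [set ((hamming x x')%:R)%:E | x' in [set x' | f x' = t]].

(* e^{- l * c}, with e^{-oo} = 0 *)
Definition exp_neg_len (R : realType) (c : R) (l : \bar R) : R :=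
  match l with
  | r%:E => expR (- (r * c))
  | _ => 0
  end.

Definition is_unbiased (R : realType) (X : Type) (n : nat) (T : finType)
  (L : T -> T -> R) (f : ('I_n -> X) -> T) (M : ('I_n -> X) -> T -> R) : Prop :=
  forall x t, \sum_(s : T) M x s * L s (f x) <= \sum_(s : T) M x s * L s t.

Definition L01 (R : realType) (T : eqType) (s t : T) : R :=
  if s != t then 1 else 0.

(* Write d(x, x') for the Hamming distance.  The proof rests on two facts.
   - Group privacy: chaining the eps-DP inequality along a path of neighbours
     gives  P(M(x) = t) <= e^(d(x,x') eps) P(M(x') = t)  for all datasets.
   - A weight bound: if a probability vector p dominates r * w for nonnegative
     weights w with some w(t0) >= 1, then r <= 1 / sum_t w(t).
   For a fixed x we take the weights w(t) = e^(-len_f(x;t) c), with w(f x) = 1.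
   Since len_f(x;t) is attained by some x' with f x' = t (or is +oo, and then
   w(t) = 0), it suffices to bound P(M(x) = t) below by r e^(-d(x,x') c).
   - First claim (c = eps): if r <= P(M(x') = f x') for every x', then group
     privacy from x' to x gives P(M(x) = t) >= r e^(-d(x,x') eps).
   - Second claim (c = 2 eps): L01-unbiasedness says f y is a mode of M(y);
     group privacy from x to x', the mode property at x', and group privacy
     back from x' to x give P(M(x) = t) >= P(M(x) = f x) e^(-2 d(x,x') eps). *)

From HB Require Import structures.
From mathcomp Require Import all_boot all_order all_algebra.
From mathcomp Require Import all_classical all_reals all_analysis.
Import Order.TTheory GRing.Theory Num.Theory.
Local Open Scope ring_scope.
Set Implicit Arguments. Unset Strict Implicit.

Section Hamming.
Variables (X : Type) (n : nat).
Implicit Types x y : 'I_n -> X.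

Definition diff_set x x' : {set 'I_n} := [set i | ~~ `[< x i = x' i >]].

Lemma hammingE x x' : hamming x x' = #|diff_set x x'|.
Proof.
rewrite /hamming /diff_set; apply: eq_card => i; rewrite inE.
by apply/idP/idP => [/set_mem //|h]; apply: mem_set.
Qed.

Lemma hamming_sym x x' : hamming x x' = hamming x' x.
Proof.
rewrite !hammingE; apply: eq_card => i; rewrite !inE.
by rewrite (asbool_equiv_eq (P := x i = x' i) (Q := x' i = x i)) //; split.
Qed.

Lemma hamming_eq0 x x' : hamming x x' = 0%N -> x = x'.
Proof.
rewrite hammingE => /eqP; rewrite cards_eq0 => /eqP diff0.
apply: funext => i; apply: contrapT => neq_i.
have : i \in diff_set x x' by rewrite inE; apply/negP => /asboolP.
by rewrite diff0 inE.
Qed.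

Lemma hamming_refl x : hamming x x = 0%N.
Proof.
rewrite hammingE; apply/eqP; rewrite cards_eq0; apply/eqP/setP => i.
by rewrite !inE asboolT.
Qed.

(* Datasets at distance k+1 are joined through a neighbour of the first one:
   copy into x one coordinate on which x and x' differ. *)
Lemma hamming_step x x' k :
  hamming x x' = k.+1 -> exists y, hamming x y = 1%N /\ hamming y x' = k.
Proof.
rewrite hammingE => dk.
have : (0 < #|diff_set x x'|)%N by rewrite dk.
case/card_gt0P => i i_diff.
exists (fun j => if j == i then x' i else x j); split.
  rewrite hammingE -(cards1 i); congr (#|pred_of_set _|).
  apply/setP => j; rewrite !inE; case: (eqVneq j i) => [->|_]; last by rewrite asboolT.
  by move: i_diff; rewrite inE.
have <- : #|diff_set x x' :\ i| = k by move: dk; rewrite (cardsD1 i) i_diff add1n => -[].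
rewrite hammingE; congr (#|pred_of_set _|); apply/setP => j; rewrite !inE.
by case: (eqVneq j i) => [->|_] /=; first rewrite asboolT.
Qed.

End Hamming.

Section GroupPrivacy.
Variables (R : realType) (X : Type) (n : nat) (T : finType).
Variables (eps : R) (M : ('I_n -> X) -> T -> R).
Hypothesis M_dp : is_dp eps M.

Lemma group_privacy x x' t :
  M x t <= expR ((hamming x x')%:R * eps) * M x' t.
Proof.
have [k dk] : exists k, hamming x x' = k by eexists.
rewrite dk; elim: k x dk => [|k IH] x dk.
  by rewrite (hamming_eq0 dk) mul0r expR0 mul1r.
have [y [dxy dyx']] := hamming_step dk.
have := M_dp (eq_leq dxy) [set t]; rewrite !big_set1 => le_xy.
apply: (le_trans le_xy).
rewrite -[k.+1]addn1 natrD mulrDl mul1r addrC expRD -mulrA.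
by apply: ler_wpM2l; [exact: expR_ge0 | exact: IH].
Qed.

Lemma group_privacy_lower x x' t :
  M x' t * expR (- ((hamming x x')%:R * eps)) <= M x t.
Proof.
rewrite expRN ler_pdivrMr ?expR_gt0 // mulrC hamming_sym.
exact: group_privacy.
Qed.

End GroupPrivacy.

Local Open Scope classical_set_scope.

Section InverseSensitivity.
Variables (R : realType) (X : Type) (n : nat) (T : Type).
Variable f : ('I_n -> X) -> T.

(* len_f(x;t) is +oo when t is not in the range of f, and otherwise it is
   attained: the Hamming distances form a nonempty set of naturals. *)
Lemma len_f_attained x t :
  @len_f R _ _ _ f x t = +oo%E \/
  exists x', f x' = t /\ @len_f R _ _ _ f x t = ((hamming x x')%:R)%:E.
Proof.
case: (pselect (exists x', f x' = t)) => [[x0 fx0]|no_preimage]; last first.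
  left; rewrite /len_f.
  suff -> : [set ((hamming x x')%:R)%:E | x' in [set x' | f x' = t]] = set0
    :> set (\bar R) by exact: ereal_inf0.
  by apply/seteqP; split => // y [x' fx' _]; apply: no_preimage; exists x'.
right.
pose dist_to_t k := `[< exists x', f x' = t /\ hamming x x' = k >].
have ex_dist : exists k, dist_to_t k by exists (hamming x x0); apply/asboolP; exists x0.
have [m /asboolP [x' [fx' dm]] m_min] := find_ex_minn ex_dist.
exists x'; split => //; apply/le_anti/andP; split.
  by apply: ereal_inf_lbound; exists x'.
apply: le_ereal_inf_tmp => _ [y fy <-]; rewrite lee_fin ler_nat dm.
by apply: m_min; apply/asboolP; exists y.
Qed.

(* x itself witnesses len_f(x; f x) = 0, so the weight at f x is 1. *)
Lemma len_f_self x : @len_f R _ _ _ f x (f x) = 0%E.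
Proof.
apply/le_anti/andP; split.
  by apply: ereal_inf_lbound; exists x => //; rewrite hamming_refl.
by apply: le_ereal_inf_tmp => _ [y _ <-]; rewrite lee_fin ler0n.
Qed.

Lemma exp_neg_len_bound x t (c r m : R) : 0 <= m ->
  (forall x', f x' = t -> r * expR (- ((hamming x x')%:R * c)) <= m) ->
  r * exp_neg_len c (@len_f R _ _ _ f x t) <= m.
Proof.
move=> m_ge0 bound.
by case: (len_f_attained x t) => [->|[x' [fx' ->]]] /=; [rewrite mulr0 | exact: bound].
Qed.

End InverseSensitivity.

Lemma exp_neg_len_ge0 (R : realType) (c : R) (l : \bar R) : 0 <= exp_neg_len c l.
Proof. by case: l => [r| |] /=; rewrite ?expR_ge0. Qed.

Lemma exp_neg_len0 (R : realType) (c : R) : exp_neg_len c 0%E = 1.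
Proof. by rewrite /= mul0r oppr0 expR0. Qed.

Lemma le_inv_weight (R : realFieldType) (T : finType) (p w : T -> R) (t0 : T) (r : R) :
  \sum_t p t = 1 -> (forall t, 0 <= w t) -> 1 <= w t0 ->
  (forall t, r * w t <= p t) -> r <= 1 / \sum_t w t.
Proof.
move=> p_sum1 w_ge0 w_t0 dom.
have sum_ge1 : 1 <= \sum_t w t.
  rewrite (bigD1 t0) //= -[1]addr0; apply: lerD => //.
  by apply: sumr_ge0 => t _.
rewrite ler_pdivlMr ?(lt_le_trans ltr01 sum_ge1) // mulr_sumr -p_sum1.
by apply: ler_sum => t _.
Qed.

Lemma expected_L01 (R : realType) (T : finType) (p : T -> R) (u : T) :
  \sum_s p s = 1 -> \sum_s p s * @L01 R T s u = 1 - p u.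
Proof.
rewrite (bigD1 u) //= => p_sum1.
rewrite (bigD1 u) //= /L01 eqxx mulr0 add0r.
rewrite (eq_bigr p) => [|s ->]; last by rewrite mulr1.
by rewrite -p_sum1 addrAC subrr add0r.
Qed.

Lemma L01_unbiased_mode (R : realType) (X : Type) (n : nat) (T : finType)
  (f : ('I_n -> X) -> T) (M : ('I_n -> X) -> T -> R) :
  is_mechanism M -> is_unbiased (@L01 R T) f M ->
  forall y t, M y t <= M y (f y).
Proof.
move=> M_mech M_unb y t; have := M_unb y t.
by rewrite !expected_L01 ?(M_mech y).2 // lerD2l lerN2.
Qed.

Lemma ereal_inf_le_of_lbound (R : realType) (I : Type) (g h : I -> R) :
  (forall r, (forall i, r <= g i) -> forall i, r <= h i) ->
  (ereal_inf [set (g i)%:E | i in [set: I]]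
     <= ereal_inf [set (h i)%:E | i in [set: I]])%E.
Proof.
move=> transfer.
have inf_le i : (ereal_inf [set (g i)%:E | i in [set: I]] <= (g i)%:E)%E.
  by apply: ereal_inf_lbound; exists i.
case inf_g : (ereal_inf _) inf_le => [r| |] inf_le; last by rewrite leNye.
  apply: le_ereal_inf_tmp => _ [i _ <-]; rewrite lee_fin.
  by apply: transfer => j; have := inf_le j; rewrite lee_fin.
by apply: le_ereal_inf_tmp => y [i _ _]; have := inf_le i; rewrite leye_eq.
Qed.

Theorem proposition2p1 (R : realType) (X : Type) (n : nat) (T : finType)
  (f : ('I_n -> X) -> T) (eps : R) (M : ('I_n -> X) -> T -> R) :
  0 < eps -> is_mechanism M -> is_dp eps M ->
  (ereal_inf [set (M x (f x))%:E | x in [set: 'I_n -> X]]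
     <= ereal_inf [set (1 / \sum_(t : T) exp_neg_len eps (@len_f R _ _ _ f x t))%:E
                  | x in [set: 'I_n -> X]])%E
  /\
  (is_unbiased (@L01 R T) f M ->
   forall x : 'I_n -> X,
     M x (f x) <= 1 / \sum_(t : T) exp_neg_len (2 * eps) (@len_f R _ _ _ f x t)).
Proof.
move=> _ M_mech M_dp.
have weight_bound c r x :
    (forall x', r * expR (- ((hamming x x')%:R * c)) <= M x (f x')) ->
    r <= 1 / \sum_(t : T) exp_neg_len c (@len_f R _ _ _ f x t).
  move=> bound; apply: (le_inv_weight (t0 := f x)) (M_mech x).2 _ _ _ => [t||t].
  - exact: exp_neg_len_ge0.
  - by rewrite len_f_self exp_neg_len0.
  - by apply: exp_neg_len_bound; [exact: (M_mech x).1 t | move=> x' <-; exact: bound].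
split.
  apply: ereal_inf_le_of_lbound => r r_le x; apply: weight_bound => x'.
  apply: le_trans (group_privacy_lower M_dp x x' (f x')).
  by apply: ler_wpM2r; [exact: expR_ge0 | exact: r_le].
move=> M_unb x; apply: weight_bound => x'.
rewrite mulrCA mulr_natl mulr2n opprD expRD mulrA.
apply: le_trans (group_privacy_lower M_dp x x' (f x')).
apply: ler_wpM2r; first exact: expR_ge0.
apply: le_trans (L01_unbiased_mode M_mech M_unb x' (f x)).
by rewrite hamming_sym; exact: group_privacy_lower.
Qed.
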